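(* If $\sigma$ and $\pi$ are permutations with the same number of descents, then $|\mu(\sigma,\pi)|$ is at most the number of occurrences of $\sigma$ in $\pi$.
   Context: A permutation of length $n$ is an arrangement of $1,\dots,n$. An occurrence of $\sigma$ in $\pi$ is a set of positions of $\pi$ whose letters, read left to right, are in the same relative order as $\sigma$. The permutation poset is ordered by $\sigma\le\pi$ iff there is an occurrence of $\sigma$ in $\pi$. A descent is an index $i$ with $\pi_i>\pi_{i+1}$. $\mu$ is the Möbius function of this poset: $\mu(a,a)=1$, $\mu(a,b)=-\sum_{a\le z<b}\mu(a,z)$ for $a<b$, $\mu(a,b)=0$ if $a\not\le b$. *)

From mathcomp Require Import all_boot all_order all_algebra.
Set Implicit Arguments. Unset Strict Implicit. Unset Printing Implicit Defensive.
Import GRing.Theory Num.Theory.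

Definition is_perm (s : seq nat) : bool := perm_eq s (iota 1 (size s)).

Definition same_order (a b : seq nat) : bool :=
  (size a == size b) &&
  [forall i : 'I_(size a), forall j : 'I_(size a),
     (nth 0 a i < nth 0 a j) == (nth 0 b i < nth 0 b j)].

(* The letters of pi at the positions in A, read left to right
   (enum of a set of ordinals lists them in increasing order). *)
Definition letters_at (pi : seq nat) (A : {set 'I_(size pi)}) : seq nat :=
  [seq nth 0 pi (nat_of_ord i) | i <- enum A].

Definition is_occurrence (sigma pi : seq nat) (A : {set 'I_(size pi)}) : bool :=
  same_order (letters_at A) sigma.

Definition occ (sigma pi : seq nat) : nat :=
  #|[set A : {set 'I_(size pi)} | is_occurrence sigma A]|.

Definition contained (sigma pi : seq nat) : bool :=
  [exists A : {set 'I_(size pi)}, is_occurrence sigma A].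

Definition des (s : seq nat) : nat :=
  count (fun i => nth 0 s i > nth 0 s i.+1) (iota 0 (size s).-1).

(* Moebius function, by the defining recursion
   mu(a,a)=1, mu(a,b) = - sum_{a <= z < b} mu(a,z), mu(a,b)=0 if not a <= b.
   z ranges over all permutations of length <= |b| (every z <= b has
   length <= |b|); the fuel k is |b|, which suffices since z < b forces
   |z| < |b|. *)
Fixpoint mu_rec (k : nat) (a b : seq nat) : int :=
  if a == b then 1%R
  else if ~~ contained a b then 0%R
  else match k with
       | 0 => 0%R
       | k'.+1 =>
         (- \sum_(m < (size b).+1)
             \sum_(z <- permutations (iota 1 m)
                    | contained a z && contained z b && (z != b))
                mu_rec k' a z)%R
       end.

Definition mu (a b : seq nat) : int := mu_rec (size b) a b.

(* Every permutation between sigma and pi has des pi descents, and an occurrence in pi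
   of such a permutation y must send the k-th ascending run of y into the k-th ascending
   run of pi.  Hence y is determined by its run word, which lists for each value the run
   containing it, and y occurs in pi inside a set A of positions exactly when its run
   word is a subword of the run word of pi restricted to the values at A.  The
   alternating sum behind Bjorner's formula for the Moebius function of the subword
   order then inverts the zeta function of [sigma, pi]:
   mu(sigma, pi) = (-1)^(|pi| - |sigma|) times the number of normal occurrences of
   sigma in pi, and normal occurrences are in particular occurrences. *)

From mathcomp Require Import all_boot all_order all_algebra zify.
Set Implicit Arguments. Unset Strict Implicit. Unset Printing Implicit Defensive.

(** * Permutations and order isomorphism *)

Lemma is_perm_uniq s : is_perm s -> uniq s.
Proof. by move=> Hs; rewrite (perm_uniq Hs) iota_uniq. Qed.

Lemma is_perm_mem s v : is_perm s -> (v \in s) = (0 < v <= size s).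
Proof. by move=> Hs; rewrite (perm_mem Hs) mem_iota; lia. Qed.

Lemma is_perm_nth s i : is_perm s -> i < size s -> 0 < nth 0 s i <= size s.
Proof. by move=> Hs Hi; rewrite -is_perm_mem // mem_nth. Qed.

Lemma count_nth (P : pred nat) s :
  count P s = count (fun j => P (nth 0 s j)) (iota 0 (size s)).
Proof. by rewrite -{1}(mkseq_nth 0 s) /mkseq count_map. Qed.

Lemma count_leq_iota v n : v <= n -> count (fun y => y <= v) (iota 1 n) = v.
Proof.
move=> le_vn; rewrite -(subnKC le_vn) iotaD count_cat.
rewrite (eq_in_count (a2 := predT)) ?count_predT ?size_iota; last first.
  by move=> y; rewrite mem_iota /=; lia.
rewrite (eq_in_count (a2 := pred0)) ?count_pred0 ?addn0 //.
by move=> y; rewrite mem_iota /=; lia.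
Qed.

Lemma sorted_ltn_nthE U a b : sorted ltn U -> a < size U -> b < size U ->
  (nth 0 U a < nth 0 U b) = (a < b).
Proof.
move=> sortU Ha Hb; have mono := sorted_ltn_nth ltn_trans 0 sortU.
case: (ltngtP a b) => [ab | ba | ->]; last by rewrite ltnn.
- exact: mono.
- by apply/negbTE; rewrite -leqNgt ltnW // mono.
Qed.

Lemma filter_subseq_subpred (T : eqType) (p q : pred T) (s : seq T) :
  subpred p q -> subseq (filter p s) (filter q s).
Proof.
move=> pq; rewrite -[filter p s](@eq_filter _ (predI p q)) ?filter_predI ?filter_subseq //.
by move=> x /=; case: (boolP (p x)) => //= /pq ->.
Qed.

Lemma is_perm_nth_rank s i : is_perm s -> i < size s ->
  nth 0 s i = count (fun y => y <= nth 0 s i) s.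
Proof.
move=> Hs Hi; have := is_perm_nth Hs Hi => Hv.
by rewrite (permP Hs) count_leq_iota //; lia.
Qed.

Definition order_iso (s t : seq nat) := size s = size t /\
  forall i j, i < size s -> j < size s ->
    (nth 0 s i < nth 0 s j) = (nth 0 t i < nth 0 t j).

Lemma same_orderP s t : reflect (order_iso s t) (same_order s t).
Proof.
apply: (iffP andP) => [[/eqP st /forallP H] | [st H]]; split => //.
- by move=> i j Hi Hj; have /forallP/(_ (Ordinal Hj))/eqP := H (Ordinal Hi).
- exact/eqP.
- by apply/forallP => i; apply/forallP => j; apply/eqP; apply: H.
Qed.

Lemma order_iso_sym s t : order_iso s t -> order_iso t s.
Proof. by move=> [st H]; split=> // i j; rewrite -st => Hi Hj; rewrite H. Qed.

Lemma order_iso_trans s t u : order_iso s t -> order_iso t u -> order_iso s u.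
Proof.
move=> [st Hst] [tu Htu]; split; first by rewrite st.
by move=> i j Hi Hj; rewrite Hst // Htu // -st.
Qed.

Lemma order_iso_leq s t i j : order_iso s t -> i < size s -> j < size s ->
  (nth 0 s i <= nth 0 s j) = (nth 0 t i <= nth 0 t j).
Proof. by move=> [_ H] Hi Hj; rewrite leqNgt [RHS]leqNgt H. Qed.

Lemma order_iso_map s t I : order_iso s t -> all (fun i => i < size s) I ->
  order_iso (map (nth 0 s) I) (map (nth 0 t) I).
Proof.
move=> [st H] /allP HI; split; first by rewrite !size_map.
move=> i j; rewrite size_map => Hi Hj.
by rewrite !(nth_map 0) //; apply: H; apply: HI; apply: mem_nth.
Qed.

Lemma order_iso_perm_eq s t : is_perm s -> is_perm t -> order_iso s t -> s = t.
Proof.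
move=> Hs Ht Hst; have [st _] := Hst.
apply: (@eq_from_nth _ 0) => // i Hi.
rewrite (is_perm_nth_rank Hs Hi) (is_perm_nth_rank Ht) -?st //.
rewrite !(count_nth _ s) !(count_nth _ t) -st.
by apply: eq_in_count => j; rewrite mem_iota add0n => Hj; apply: order_iso_leq.
Qed.

Definition std (s : seq nat) := [seq count (fun t => t <= y) s | y <- s].

Lemma size_std s : size (std s) = size s.
Proof. exact: size_map. Qed.

Lemma count_leq_ltn s a b : a < b -> b \in s ->
  count (fun t => t <= a) s < count (fun t => t <= b) s.
Proof.
move=> ab sb; have := count_predUI (fun t => t <= a) (fun t => a < t <= b) s.
rewrite (eq_count (a2 := fun t => t <= b)); last by move=> t /=; lia.
rewrite (eq_count (a1 := predI _ _) (a2 := pred0)) ?count_pred0; last by move=> t /=; lia.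
have : 0 < count (fun t => a < t <= b) s.
  by rewrite -has_count; apply/hasP; exists b => //=; lia.
lia.
Qed.

Lemma order_iso_std s : order_iso s (std s).
Proof.
split; first by rewrite size_std.
move=> i j Hi Hj; rewrite !(nth_map 0) //.
case: (ltnP (nth 0 s i) (nth 0 s j)) => H.
  by rewrite count_leq_ltn // mem_nth.
by apply/esym/negbTE; rewrite -leqNgt; apply: sub_count => t /=; lia.
Qed.

Lemma is_perm_std s : uniq s -> is_perm (std s).
Proof.
move=> us; rewrite /is_perm size_std.
have rank_inj : {in s &, injective (fun y => count (fun t => t <= y) s)}.
  move=> a b sa sb /= E; case: (ltngtP a b) => // ab.
  - by have := count_leq_ltn ab sb; rewrite E ltnn.
  - by have := count_leq_ltn ab sa; rewrite E ltnn.
have std_sub : {subset std s <= iota 1 (size s)}.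
  move=> y /mapP [a sa ->]; rewrite mem_iota add1n ltnS count_size andbT.
  by rewrite -has_count; apply/hasP; exists a.
have ustd : uniq (std s) by rewrite map_inj_in_uniq.
have le_size : size (iota 1 (size s)) <= size (std s) by rewrite size_iota size_std.
have [_ Estd] := uniq_min_size ustd std_sub le_size.
by apply: uniq_perm; rewrite ?iota_uniq.
Qed.

(** * Occurrences as lists of positions *)

Definition positions n (A : {set 'I_n}) : seq nat := [seq val i | i <- enum A].

Lemma positions_filter n (A : {set 'I_n}) :
  positions A = [seq val i | i <- filter (mem A) (enum 'I_n)].
Proof. by rewrite /positions {1}/enum_mem -enumT. Qed.

Lemma positions_subseq n (A : {set 'I_n}) : subseq (positions A) (iota 0 n).
Proof. by rewrite positions_filter -val_enum_ord map_subseq // filter_subseq. Qed.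

Lemma mem_positions n (A : {set 'I_n}) (i : 'I_n) : (val i \in positions A) = (i \in A).
Proof. by rewrite /positions (mem_map val_inj) mem_enum. Qed.

Lemma positions_set n J : subseq J (iota 0 n) -> positions [set i : 'I_n | val i \in J] = J.
Proof.
move=> HJ; rewrite positions_filter.
rewrite (@eq_filter _ _ (preim val (mem J))); last by move=> i; rewrite /= inE.
by rewrite -filter_map val_enum_ord -(subseq_uniqP (iota_uniq 0 n) HJ).
Qed.

Lemma letters_at_positions (pi : seq nat) (A : {set 'I_(size pi)}) :
  letters_at A = map (nth 0 pi) (positions A).
Proof. by rewrite /letters_at /positions -map_comp. Qed.

Lemma subseq_iota_ltn J n : subseq J (iota 0 n) -> all (fun i => i < n) J.
Proof. by move=> /mem_subseq sub; apply/allP => i /sub; rewrite mem_iota. Qed.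

Lemma subseq_iota_eq J n : subseq J (iota 0 n) -> size J = n -> J = iota 0 n.
Proof.
move=> sub sizeJ; have [_] := size_subseq_leqif sub.
by rewrite size_iota sizeJ eqxx => /esym/eqP.
Qed.

Lemma map_nth_subseq (s : seq nat) I : subseq I (iota 0 (size s)) ->
  subseq (map (nth 0 s) I) s.
Proof. by move=> sub; rewrite -{2}(mkseq_nth 0 s) /mkseq map_subseq. Qed.

Definition occurs_at (a b : seq nat) (J : seq nat) :=
  subseq J (iota 0 (size b)) /\ order_iso (map (nth 0 b) J) a.

Lemma occurrenceP (z pi : seq nat) (A : {set 'I_(size pi)}) :
  reflect (occurs_at z pi (positions A)) (is_occurrence z A).
Proof.
rewrite /is_occurrence letters_at_positions.
by apply: (iffP (same_orderP _ _)) => [|[]//]; split=> //; apply: positions_subseq.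
Qed.

Lemma containedP a b : reflect (exists J, occurs_at a b J) (contained a b).
Proof.
apply: (iffP existsP) => [[A /occurrenceP] | [J occJ]]; first by exists (positions A).
by exists [set i | val i \in J]; apply/occurrenceP; rewrite positions_set //; case: occJ.
Qed.

Lemma occurs_at_size a b J : occurs_at a b J -> size a = size J /\ size J <= size b.
Proof.
move=> [sub [sizeJ _]]; split; first by rewrite -sizeJ size_map.
by have := size_subseq sub; rewrite size_iota.
Qed.

Lemma occurs_at_ltn a b J t : occurs_at a b J -> t < size J -> nth 0 J t < size b.
Proof. by move=> [/subseq_iota_ltn/allP sub _] Ht; apply/sub/mem_nth. Qed.

Lemma occurs_at_nth_ltn a b J t t' : occurs_at a b J -> t < t' -> t' < size J ->
  nth 0 J t < nth 0 J t'.
Proof.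
move=> [sub _] tt' Ht'; have sortJ := subseq_sorted ltn_trans sub (iota_ltn_sorted 0 _).
by apply: (sorted_ltn_nth ltn_trans 0 sortJ) => //; rewrite inE; lia.
Qed.

Lemma contained_size a b : contained a b -> size a <= size b.
Proof. by move=> /containedP [J /occurs_at_size [-> ->]]. Qed.

Lemma contained_refl a : contained a a.
Proof.
apply/containedP; exists (iota 0 (size a)); split => //.
by rewrite -{3}(mkseq_nth 0 a).
Qed.

Lemma occurs_at_trans a z b I1 I2 : occurs_at a z I1 -> occurs_at z b I2 ->
  occurs_at a b (map (nth 0 I2) I1).
Proof.
move=> [sub1 iso1] [sub2 iso2].
have sizeI2 : size z = size I2 by have [<- _] := iso2; rewrite size_map.
have ltnI1 := subseq_iota_ltn sub1; rewrite sizeI2 in ltnI1 sub1.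
split; first exact: subseq_trans (map_nth_subseq sub1) sub2.
apply: order_iso_trans iso1.
have -> : map (nth 0 b) (map (nth 0 I2) I1) = map (nth 0 (map (nth 0 b) I2)) I1.
  by rewrite -map_comp; apply/eq_in_map => i /(allP ltnI1) Hi /=; rewrite (nth_map 0).
by apply: order_iso_map iso2 _; rewrite size_map.
Qed.

Lemma contained_trans a z b : contained a z -> contained z b -> contained a b.
Proof.
move=> /containedP [I1 occ1] /containedP [I2 occ2]; apply/containedP.
by exists (map (nth 0 I2) I1); apply: occurs_at_trans occ1 occ2.
Qed.

Lemma contained_size_eq a b : is_perm a -> is_perm b -> contained a b ->
  size a = size b -> a = b.
Proof.
move=> Ha Hb /containedP [J occJ] sizeab.
have [sizeJ _] := occurs_at_size occJ.
have [sub iso] := occJ; rewrite (subseq_iota_eq sub) -?sizeJ // in iso.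
rewrite [map _ _](mkseq_nth 0 b) in iso.
by symmetry; apply: order_iso_perm_eq.
Qed.

Lemma contained_anti a b : is_perm a -> is_perm b -> contained a b ->
  contained b a -> a = b.
Proof.
move=> Ha Hb ab ba; apply: contained_size_eq => //.
by apply/eqP; rewrite eqn_leq !contained_size.
Qed.

Lemma contained_ltn a b : is_perm a -> is_perm b -> contained a b -> a != b ->
  size a < size b.
Proof.
move=> Ha Hb ab /eqP neq_ab; rewrite ltn_neqAle contained_size // andbT.
by apply/eqP => sizeab; apply/neq_ab/contained_size_eq.
Qed.

(** * Ascending runs *)

Definition descent (s : seq nat) j := nth 0 s j.+1 < nth 0 s j.

(* Position i of s lies in the ascending run number [run_index s i], counting from 0. *)
Definition run_index (s : seq nat) i := count (descent s) (iota 0 i).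

Lemma run_indexS s j : run_index s j.+1 = run_index s j + descent s j.
Proof. by rewrite /run_index -addn1 iotaD count_cat /= addn0. Qed.

Lemma run_index_mono s : {homo run_index s : i i' / i <= i'}.
Proof.
move=> i i'; elim: i' => [|i' IH]; first by rewrite leqn0 => /eqP ->.
rewrite leq_eqVlt => /orP [/eqP -> // | lt_ii']; rewrite run_indexS.
by have := IH lt_ii'; lia.
Qed.

Lemma run_index_eq_leq s i i' : i <= i' -> run_index s i = run_index s i' ->
  nth 0 s i <= nth 0 s i'.
Proof.
elim: i' => [|i' IH]; first by rewrite leqn0 => /eqP ->.
rewrite leq_eqVlt ltnS => /orP [/eqP -> // | le_ii']; rewrite run_indexS => E.
have := run_index_mono s le_ii'; have := IH le_ii'; rewrite /descent in E *; lia.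
Qed.

Lemma run_index_desc s i i' : i <= i' ->
  run_index s i + (nth 0 s i' < nth 0 s i) <= run_index s i'.
Proof.
move=> le_ii'; case: ltnP => [lt_i'i | _]; last by rewrite addn0 run_index_mono.
rewrite addn1 ltn_neqAle run_index_mono // andbT.
by apply: contraTneq lt_i'i => /(run_index_eq_leq le_ii'); rewrite -leqNgt.
Qed.

Lemma run_index_leq_des s i : i < size s -> run_index s i <= des s.
Proof. by move=> Hi; apply: run_index_mono; lia. Qed.

Section RunsOfOccurrences.
Variables (a b J : seq nat).
Hypothesis occJ : occurs_at a b J.

(* Every descent of a between positions t and t' is a descent of b between J_t and J_t'. *)
Lemma run_index_occurs_at t t' : t <= t' -> t' < size J ->
  run_index a t' + run_index b (nth 0 J t) <= run_index a t + run_index b (nth 0 J t').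
Proof.
elim: t' => [|t' IH]; first by rewrite leqn0 => /eqP ->.
rewrite leq_eqVlt ltnS => /orP [/eqP -> // | le_tt'] Ht'.
have [sizeJ _] := occurs_at_size occJ; rewrite run_indexS.
have -> : descent a t' = (nth 0 b (nth 0 J t'.+1) < nth 0 b (nth 0 J t')).
  have [_ [_ iso]] := occJ; rewrite /descent -iso ?size_map; try lia.
  by rewrite !(nth_map 0) //; lia.
have := run_index_desc b (ltnW (occurs_at_nth_ltn occJ (ltnSn t') Ht')).
have := IH le_tt' (ltnW Ht'); lia.
Qed.

Lemma des_occurs_at : des a <= des b.
Proof.
have [sizeJ _] := occurs_at_size occJ.
have [J0 | J_gt0] := posnP (size J); first by rewrite /des sizeJ J0.
have Hlast : (size J).-1 < size J by rewrite prednK.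
have := run_index_occurs_at (leq0n _) Hlast.
have := run_index_leq_des (occurs_at_ltn occJ Hlast).
have -> : des a = run_index a (size J).-1 by rewrite -sizeJ.
have : run_index a 0 = 0 by []; lia.
Qed.

Lemma run_index_occurs_at_des t : des a = des b -> t < size J ->
  run_index a t = run_index b (nth 0 J t).
Proof.
move=> eq_des Ht; have [sizeJ _] := occurs_at_size occJ.
have Hlast : (size J).-1 < size J by lia.
have := run_index_occurs_at (leq0n t) Ht.
have le_t : t <= (size J).-1 by lia.
have := run_index_occurs_at le_t Hlast.
have := run_index_leq_des (occurs_at_ltn occJ Hlast).
have : run_index a (size J).-1 = des a by rewrite -sizeJ.
have : run_index a 0 = 0 by []; lia.
Qed.

End RunsOfOccurrences.

Lemma des_contained a b : contained a b -> des a <= des b.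
Proof. by move=> /containedP [J /des_occurs_at]. Qed.

(** * Run words *)

Definition value_run (s : seq nat) v := run_index s (index v s).

Definition run_word (s : seq nat) := map (value_run s) (iota 1 (size s)).

Lemma size_run_word s : size (run_word s) = size s.
Proof. by rewrite size_map size_iota. Qed.

Lemma nth_run_word s t : is_perm s -> t < size s ->
  nth 0 (run_word s) (nth 0 s t).-1 = run_index s t.
Proof.
move=> Hs Ht; have := is_perm_nth Hs Ht => Hv.
rewrite (nth_map 0) ?size_iota ?nth_iota; try lia.
by rewrite add1n prednK ?/value_run ?nth_index ?(index_uniq _ Ht (is_perm_uniq Hs)) //; lia.
Qed.

Lemma sorted_values_order_iso V x N : is_perm x -> uniq V -> order_iso V x ->
  {subset V <= iota 1 N} ->
  filter (mem V) (iota 1 N) = [seq nth 0 V (index v x) | v <- iota 1 (size x)].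
Proof.
move=> Hx uV [sizeV iso] subV.
have mem_x v : v \in iota 1 (size x) -> v \in x by rewrite mem_iota is_perm_mem.
have index_ltn v : v \in iota 1 (size x) -> index v x < size x.
  by move/mem_x; rewrite index_mem.
apply: (irr_sorted_eq ltn_trans ltnn).
- by apply: sorted_filter; [exact: ltn_trans | exact: iota_ltn_sorted].
- apply: (@homo_sorted_in _ _ (mem (iota 1 (size x)))); last exact: iota_ltn_sorted.
  + move=> v v' Hv Hv' lt_vv'.
    by rewrite iso ?sizeV ?index_ltn // !nth_index ?mem_x.
  + by apply/allP.
move=> w; rewrite mem_filter andb_idr => [|/subV //]; apply/idP/mapP.
  move=> Vw; exists (nth 0 x (index w V)); last first.
    by rewrite index_uniq ?nth_index // -?sizeV ?index_mem // is_perm_uniq.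
  have Hi : index w V < size x by rewrite -sizeV index_mem.
  by have := is_perm_nth Hx Hi; rewrite mem_iota; lia.
by move=> [v /index_ltn Hv ->]; apply: mem_nth; rewrite sizeV.
Qed.

Lemma run_word_occurs_at pi x J : is_perm pi -> is_perm x -> des x = des pi ->
  occurs_at x pi J ->
  run_word x = map (value_run pi) (filter (mem (map (nth 0 pi) J)) (iota 1 (size pi))).
Proof.
move=> Hpi Hx eq_des occJ; have [sizeJ _] := occurs_at_size occJ.
have [subJ isoJ] := occJ.
have subV : subseq (map (nth 0 pi) J) pi := map_nth_subseq subJ.
rewrite (sorted_values_order_iso (x := x)) //; first last.
- by move=> v /(mem_subseq subV); rewrite -(perm_mem Hpi).
- exact: subseq_uniq subV (is_perm_uniq Hpi).
rewrite -map_comp; apply/eq_in_map => v; rewrite mem_iota => Hv /=.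
have Ht : index v x < size J by rewrite -sizeJ index_mem is_perm_mem //; lia.
rewrite (nth_map 0) // /value_run index_uniq ?is_perm_uniq ?(occurs_at_ltn occJ) //.
exact: run_index_occurs_at_des.
Qed.

Lemma occurs_at_run_word_subseq pi x J (p : pred nat) : is_perm pi -> is_perm x ->
  des x = des pi -> occurs_at x pi J -> {in J, forall i, p (nth 0 pi i)} ->
  subseq (run_word x) (map (value_run pi) (filter p (iota 1 (size pi)))).
Proof.
move=> Hpi Hx eq_des occJ pJ; rewrite (run_word_occurs_at Hpi Hx eq_des occJ).
by apply/map_subseq/filter_subseq_subpred => v /mapP [i Ji ->]; apply: pJ.
Qed.

(* Ordering values by their run first and by size second recovers the order of letters. *)
Definition run_order (pi : seq nat) : rel nat := fun u u' =>
  (value_run pi u < value_run pi u') || (value_run pi u == value_run pi u') && (u < u').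

Lemma run_order_trans pi : transitive (run_order pi).
Proof. by move=> u' u u''; rewrite /run_order; lia. Qed.

Lemma run_order_irr pi : irreflexive (run_order pi).
Proof. by move=> u; rewrite /run_order; lia. Qed.

Lemma sorted_run_order pi : is_perm pi -> sorted (run_order pi) pi.
Proof.
move=> Hpi; have upi := is_perm_uniq Hpi.
apply/(sortedP 0) => i Hi; rewrite /run_order /value_run !index_uniq ?run_indexS //.
  have := nth_uniq 0 (ltnW Hi) Hi upi; rewrite /descent.
  case: (ltnP (nth 0 pi i.+1) (nth 0 pi i)) => [_ _ | desc]; first by rewrite addn1 ltnSn.
  by rewrite addn0 ltnn eqxx /= (ltn_eqF (ltnSn i)) => /eqP; lia.
exact: ltnW Hi.
Qed.

Section RunWordSubseq.
Variables (pi x U : seq nat).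
Hypotheses (Hpi : is_perm pi) (Hx : is_perm x) (sortU : sorted ltn U).
Hypothesis run_wordU : map (value_run pi) U = run_word x.

Lemma size_run_word_values : size U = size x.
Proof. by rewrite -(size_run_word x) -run_wordU size_map. Qed.

Lemma ranks_ltn v : v \in x -> v.-1 < size U.
Proof. by rewrite size_run_word_values is_perm_mem //; lia. Qed.

Lemma value_run_ranks t : t < size x ->
  value_run pi (nth 0 U (nth 0 x t).-1) = run_index x t.
Proof.
move=> Ht; rewrite -(nth_map 0 0 (value_run pi)) ?ranks_ltn ?mem_nth //.
by rewrite run_wordU nth_run_word.
Qed.

Lemma sorted_run_order_ranks : sorted (run_order pi) [seq nth 0 U v.-1 | v <- x].
Proof.
apply/(sortedP 0) => t; rewrite size_map => Ht; have Ht' := ltnW Ht.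
rewrite !(nth_map 0) // /run_order !value_run_ranks // run_indexS /descent.
case: (ltnP (nth 0 x t.+1) (nth 0 x t)) => desc; first by rewrite addn1 ltnSn.
have := nth_uniq 0 Ht' Ht (is_perm_uniq Hx).
have := is_perm_nth Hx Ht; have := is_perm_nth Hx Ht'.
rewrite addn0 ltnn eqxx sorted_ltn_nthE ?ranks_ltn ?mem_nth // (ltn_eqF (ltnSn t)).
by move=> ? ? /eqP /=; lia.
Qed.

Hypothesis subU : {subset U <= iota 1 (size pi)}.

Lemma run_word_occurs_at_values :
  occurs_at x pi [seq i <- iota 0 (size pi) | nth 0 pi i \in U].
Proof.
set J := filter _ _; split; first exact: filter_subseq.
have -> : map (nth 0 pi) J = [seq nth 0 U v.-1 | v <- x].
  have -> : map (nth 0 pi) J = filter (mem U) pi.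
    by rewrite -[in RHS](mkseq_nth 0 pi) /mkseq filter_map.
  apply: (irr_sorted_eq (@run_order_trans pi) (@run_order_irr pi)).
  - exact/sorted_filter/sorted_run_order/Hpi/run_order_trans.
  - exact: sorted_run_order_ranks.
  move=> u; rewrite mem_filter; apply/andP/mapP => [[Uu _] | [v xv ->]].
    exists (index u U).+1; last by rewrite /= nth_index.
    by rewrite is_perm_mem // -size_run_word_values index_mem.
  split; first exact/mem_nth/ranks_ltn.
  have /subU := mem_nth 0 (ranks_ltn xv); rewrite mem_iota is_perm_mem //; lia.
split; first by rewrite size_map.
move=> i j; rewrite size_map => Hi Hj; rewrite !(nth_map 0) //.
have := is_perm_nth Hx Hi; have := is_perm_nth Hx Hj.
rewrite sorted_ltn_nthE ?ranks_ltn ?mem_nth //; lia.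
Qed.

End RunWordSubseq.

Lemma run_word_subseq_occurs_at pi x (p : pred nat) : is_perm pi -> is_perm x ->
  subseq (run_word x) (map (value_run pi) (filter p (iota 1 (size pi)))) ->
  exists2 J, occurs_at x pi J & {in J, forall i, p (nth 0 pi i)}.
Proof.
move=> Hpi Hx /subseqP [m _]; rewrite -map_mask => run_wordU.
set U := mask m _ in run_wordU.
have subU : subseq U (filter p (iota 1 (size pi))) := mask_subseq m _.
have subU' : {subset U <= iota 1 (size pi)}.
  by move=> u /(mem_subseq subU); rewrite mem_filter => /andP [].
have sortU : sorted ltn U.
  apply: (subseq_sorted ltn_trans (subseq_trans subU (filter_subseq _ _))).
  exact: iota_ltn_sorted.
exists [seq i <- iota 0 (size pi) | nth 0 pi i \in U].
  exact: run_word_occurs_at_values.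
by move=> i; rewrite mem_filter => /andP [/(mem_subseq subU)]; rewrite mem_filter => /andP [].
Qed.

Import GRing.Theory.

(** * An alternating sum over subwords *)

Section SubwordSum.
Local Open Scope ring_scope.

Definition iverson (b : bool) : int := if b then 1 else 0.

Fixpoint masks n : seq bitseq :=
  if n is n'.+1 then map (cons true) (masks n') ++ map (cons false) (masks n')
  else [:: [::]].

Lemma mem_masks n m : (m \in masks n) = (size m == n).
Proof.
elim: n m => [|n IH] [|b m] //=; rewrite mem_cat.
  by apply/negbTE; rewrite negb_or; apply/andP; split; apply/mapP => -[].
rewrite eqSS -IH; apply/orP/idP => [[] /mapP [m' Hm' [_ ->]] // | Hm].
by case: b; [left | right]; apply: map_f.
Qed.

Lemma masks_uniq n : uniq (masks n).
Proof.
elim: n => [|n IH] //=; rewrite cat_uniq !map_inj_uniq ?IH //=; try by move=> ? ? [].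
by rewrite andbT; apply/hasP => -[_ /mapP [m _ ->] /mapP [] ].
Qed.

Lemma big_masksS n (P : pred bitseq) (F : bitseq -> int) :
  \sum_(m <- masks n.+1 | P m) F m =
  \sum_(m <- masks n | P (true :: m)) F (true :: m) +
  \sum_(m <- masks n | P (false :: m)) F (false :: m).
Proof. by rewrite /= big_cat !big_map. Qed.

Definition mask_sign (m : bitseq) : int := (-1) ^+ (count negb m).

Variable T : eqType.
Implicit Types (a c : T) (w v : seq T) (m : bitseq).

(* A mask of w is normal when it keeps every letter equal to its predecessor; [normal_head a w m]
   is the same condition for the first letter of w, with a in the role of its predecessor. *)
Definition normal_head a w m : bool :=
  if w is d :: _ then (d == a) ==> head false m else true.

Fixpoint normal_mask w m : bool :=
  match w, m with
  | c :: w', _ :: m' => normal_mask w' m' && normal_head c w' m'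
  | _, _ => true
  end.

Definition subword_sum w v : int :=
  \sum_(m <- masks (size w) | normal_mask w m) mask_sign m * iverson (subseq v (mask m w)).

Definition subword_sum_after a w v : int :=
  \sum_(m <- masks (size w) | normal_mask w m && normal_head a w m)
     mask_sign m * iverson (subseq v (mask m w)).

Definition drop_head c v := if v is d :: v' then (if d == c then v' else v) else v.

Lemma subseq_cons_drop_head c v w : subseq v (c :: w) = subseq (drop_head c v) w.
Proof. by case: v => [|d v] //=; rewrite sub0seq. Qed.

Lemma subword_sum_after_nil a v : subword_sum_after a [::] v = iverson (v == [::]).
Proof. by rewrite /subword_sum_after big_seq1 /= mul1r. Qed.

Lemma subword_sum_after_cons a c w v :
  subword_sum_after a (c :: w) v =
  subword_sum_after c w (drop_head c v) - (if c == a then 0 else subword_sum_after c w v).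
Proof.
rewrite /subword_sum_after [size _]/= big_masksS; congr (_ + _).
  apply: eq_big => [m | m _]; first by rewrite /= implybT andbT.
  by rewrite [mask _ _]/= subseq_cons_drop_head.
case: (c =P a) => [-> | /eqP/negPf neq_ca].
  by rewrite big_pred0 ?oppr0 // => m; rewrite /= eqxx andbF.
rewrite -sumrN; apply: eq_big => [m | m _]; first by rewrite /= neq_ca andbT.
by rewrite /mask_sign /= exprS mulN1r mulNr.
Qed.

Lemma subword_sum_cons c w v :
  subword_sum (c :: w) v = subword_sum_after c w (drop_head c v) - subword_sum_after c w v.
Proof.
rewrite /subword_sum /subword_sum_after [size _]/= big_masksS; congr (_ + _).
  by apply: eq_bigr => m _; rewrite [mask _ _]/= subseq_cons_drop_head.
rewrite -sumrN; apply: eq_bigr => m _.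
by rewrite /mask_sign /= exprS mulN1r mulNr.
Qed.

Lemma drop_head_difference c w :
  (forall v, subword_sum_after c w v - subword_sum_after c w (c :: v) = iverson (v == w)) ->
  forall v, subword_sum_after c w (drop_head c v) - subword_sum_after c w v
            = iverson (v == c :: w).
Proof.
move=> diff [|d v] /=; first by rewrite subrr.
case: eqP => [-> | neq_dc]; first by rewrite diff eqseq_cons eqxx.
by rewrite subrr eqseq_cons; case: eqP.
Qed.

Lemma subword_sum_after_difference w a v :
  subword_sum_after a w v - subword_sum_after a w (a :: v) = iverson (v == w).
Proof.
elim: w a v => [|c w IH] a v; first by rewrite !subword_sum_after_nil subr0.
rewrite !subword_sum_after_cons; case: eqP => [-> | neq_ca].
  by rewrite !subr0 /= eqxx; apply: drop_head_difference.
rewrite !drop_head_difference // eqseq_cons.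
by case: (a =P c) => [eq_ac | _]; [case: neq_ca | rewrite subr0].
Qed.

(* The identity behind Bjorner's formula for the Moebius function of the subword order. *)
Lemma subword_sumE w v : subword_sum w v = iverson (v == w).
Proof.
case: w => [|c w]; first by rewrite /subword_sum big_seq1 /= mul1r.
by rewrite subword_sum_cons; apply: drop_head_difference; apply: subword_sum_after_difference.
Qed.

End SubwordSum.

(** * Selections of positions *)

Section Selections.
Variable pi : seq nat.
Implicit Type A : {set 'I_(size pi)}.

Lemma uniq_letters_at A : uniq pi -> uniq (letters_at A).
Proof.
move=> upi; have /allP ltnA := subseq_iota_ltn (positions_subseq A).
rewrite letters_at_positions map_inj_in_uniq.
  exact: subseq_uniq (positions_subseq A) (iota_uniq 0 _).
by move=> i j /ltnA Hi /ltnA Hj /eqP; rewrite nth_uniq // => /eqP.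
Qed.

Lemma is_occurrence_std z A : uniq pi -> is_perm z ->
  is_occurrence z A = (z == std (letters_at A)).
Proof.
move=> upi Hz; apply/same_orderP/eqP => [iso | ->]; last exact: order_iso_std.
apply: order_iso_perm_eq => //; first exact/is_perm_std/uniq_letters_at.
exact: order_iso_trans (order_iso_sym iso) (order_iso_std _).
Qed.

Lemma contained_std_letters y A :
  contained y (std (letters_at A)) <->
  exists2 J, occurs_at y pi J & subseq J (positions A).
Proof.
have isoA := order_iso_std (letters_at A); rewrite letters_at_positions in isoA *.
set L := map _ (positions A) in isoA *.
have sizeL : size L = size (positions A) by rewrite size_map.
have L_positions J1 : subseq J1 (iota 0 (size L)) ->
    map (nth 0 L) J1 = map (nth 0 pi) (map (nth 0 (positions A)) J1).
  move=> /subseq_iota_ltn/allP ltnJ1; rewrite -map_comp.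
  by apply/eq_in_map => i /ltnJ1 Hi; rewrite /= (nth_map 0) // -sizeL.
split.
- move=> /containedP [J1 [sub1 iso1]]; rewrite size_std in sub1.
  exists (map (nth 0 (positions A)) J1); last by apply: map_nth_subseq; rewrite -sizeL.
  split; first by apply: subseq_trans (positions_subseq A); apply: map_nth_subseq; rewrite -sizeL.
  rewrite -L_positions //; apply: order_iso_trans iso1.
  by apply: order_iso_map isoA _; apply: subseq_iota_ltn.
- move=> [J [_ isoJ] /subseqP [m sizem EJ]]; rewrite {J}EJ in isoJ; apply/containedP.
  exists (mask m (iota 0 (size L))); split; first by rewrite size_std mask_subseq.
  apply: order_iso_trans isoJ.
  have -> : map (nth 0 pi) (mask m (positions A)) = map (nth 0 L) (mask m (iota 0 (size L))).
    have Lmk : map (nth 0 L) (iota 0 (size L)) = L := mkseq_nth 0 L.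
    by transitivity (mask m L); [rewrite /L map_mask | rewrite -{1}Lmk map_mask].
  apply: order_iso_map (order_iso_sym isoA) _; rewrite size_std.
  by apply/allP => i /mem_mask; rewrite mem_iota.
Qed.

Definition value_mask A : bitseq :=
  [seq index v pi \in positions A | v <- iota 1 (size pi)].

Hypothesis Hpi : is_perm pi.

Lemma nth_value_mask A r : r < size pi ->
  nth false (value_mask A) r = (index r.+1 pi \in positions A).
Proof. by move=> Hr; rewrite (nth_map 0) ?size_iota // nth_iota // add1n. Qed.

Lemma value_mask_inj : injective value_mask.
Proof.
move=> A B eqAB; apply/setP => i; have := is_perm_nth Hpi (ltn_ord i) => Hv.
have Hr : (nth 0 pi i).-1 < size pi by lia.
have := nth_value_mask A Hr; rewrite eqAB nth_value_mask // prednK; last by lia.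
by rewrite index_uniq ?is_perm_uniq // !mem_positions => ->.
Qed.

Lemma value_maskK m : size m = size pi ->
  value_mask [set i : 'I_(size pi) | nth false m (nth 0 pi i).-1] = m.
Proof.
move=> sizem; apply: (@eq_from_nth _ false); first by rewrite size_map size_iota.
move=> r; rewrite size_map size_iota => Hr; rewrite nth_value_mask //.
have Hi : index r.+1 pi < size pi by rewrite index_mem is_perm_mem.
by rewrite [index _ _]/(val (Ordinal Hi)) mem_positions inE nth_index ?is_perm_mem.
Qed.

Lemma sum_value_mask (F : bitseq -> int) :
  (\sum_A F (value_mask A) = \sum_(m <- masks (size pi)) F m)%R.
Proof.
rewrite -(big_image _ _ value_mask predT F); apply: perm_big; apply: uniq_perm.
- by rewrite map_inj_uniq ?enum_uniq //; apply: value_mask_inj.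
- exact: masks_uniq.
move=> m; rewrite mem_masks; apply/mapP/eqP => [[A _ ->] | sizem].
  by rewrite size_map size_iota.
by exists [set i : 'I_(size pi) | nth false m (nth 0 pi i).-1]; rewrite ?mem_enum ?value_maskK.
Qed.

Lemma count_negb_value_mask A : count negb (value_mask A) = size pi - #|A|.
Proof.
have count_id : count id (value_mask A) = #|A|.
  rewrite count_map -(permP Hpi) (count_nth _ pi).
  rewrite (@eq_in_count _ _ (mem (positions A))); last first.
    by move=> i; rewrite mem_iota add0n => Hi /=; rewrite index_uniq ?is_perm_uniq.
  rewrite -size_filter -(subseq_uniqP (iota_uniq 0 _) (positions_subseq A)).
  by rewrite size_map cardE.
have := count_predC id (value_mask A).
by rewrite size_map size_iota count_id (eq_count (a2 := negb)) //; lia.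
Qed.

Lemma contained_std_run_word y A : is_perm y -> des y = des pi ->
  contained y (std (letters_at A)) = subseq (run_word y) (mask (value_mask A) (run_word pi)).
Proof.
move=> Hy eq_des.
have -> : mask (value_mask A) (run_word pi) =
    map (value_run pi) [seq v <- iota 1 (size pi) | index v pi \in positions A].
  by rewrite filter_mask map_mask.
apply/idP/idP.
- move/contained_std_letters => [J occJ subJ].
  apply: (occurs_at_run_word_subseq Hpi Hy eq_des occJ) => i Ji /=.
  have /allP ltnJ := subseq_iota_ltn (proj1 occJ).
  by rewrite index_uniq ?is_perm_uniq ?ltnJ // (mem_subseq subJ).
- move=> /(run_word_subseq_occurs_at Hpi Hy) [J occJ pJ].
  apply/contained_std_letters; exists J => //.
  have /allP ltnJ := subseq_iota_ltn (proj1 occJ).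
  rewrite (subseq_uniqP (iota_uniq 0 _) (proj1 occJ)).
  rewrite (subseq_uniqP (iota_uniq 0 _) (positions_subseq A)).
  apply: filter_subseq_subpred => i /= Ji.
  by have := pJ i Ji; rewrite index_uniq ?is_perm_uniq ?ltnJ.
Qed.

End Selections.

(** * The recursion for the Moebius function *)

Definition perms_upto n := flatten [seq permutations (iota 1 m) | m <- iota 0 n.+1].

Lemma mem_permutations_iota z m :
  (z \in permutations (iota 1 m)) = is_perm z && (size z == m).
Proof.
rewrite mem_permutations /is_perm; apply/idP/andP => [pz | [pz /eqP <-] //].
by have /eqP := perm_size pz; rewrite size_iota => /eqP sizez; rewrite sizez.
Qed.

Lemma mem_perms_upto n z : (z \in perms_upto n) = is_perm z && (size z <= n).
Proof.
apply/flattenP/andP => [[s /mapP [m] + ->] | [Hz sizez]].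
  by rewrite mem_iota mem_permutations_iota => Hm /andP [-> /eqP ->]; lia.
exists (permutations (iota 1 (size z))); last by rewrite mem_permutations_iota Hz eqxx.
by apply/mapP; exists (size z); rewrite // mem_iota; lia.
Qed.

Lemma perms_uptoS n : perms_upto n.+1 = perms_upto n ++ permutations (iota 1 n.+1).
Proof. by rewrite /perms_upto -[n.+2]addn1 iotaD map_cat flatten_cat /= cats0. Qed.

Lemma perms_upto_uniq n : uniq (perms_upto n).
Proof.
elim: n => // n IH; rewrite perms_uptoS cat_uniq IH permutations_uniq andbT.
apply/hasP => -[z]; rewrite mem_permutations_iota mem_perms_upto.
by move=> /andP [_ /eqP ->] /andP [_]; lia.
Qed.

Lemma big_perms_upto_leq (R : Type) (idx : R) (op : Monoid.com_law idx) m n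
    (P : pred (seq nat)) (F : seq nat -> R) :
  m <= n -> (forall z, P z -> size z <= m) ->
  \big[op/idx]_(z <- perms_upto n | P z) F z = \big[op/idx]_(z <- perms_upto m | P z) F z.
Proof.
move=> le_mn sizeP; elim: n le_mn => [|n IH]; first by rewrite leqn0 => /eqP ->.
rewrite leq_eqVlt => /orP [/eqP -> // | lt_mn].
rewrite perms_uptoS big_cat IH //.
have -> : \big[op/idx]_(z <- permutations (iota 1 n.+1) | P z) F z = idx.
  apply: big1_seq => z /andP [Pz].
  rewrite mem_permutations_iota => /andP [_ /eqP sizez].
  by have := sizeP z Pz; rewrite sizez => /leq_ltn_trans/(_ lt_mn); rewrite ltnn.
by rewrite Monoid.mulm1.
Qed.

Lemma mu_recS k a b : mu_rec k.+1 a b =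
  if a == b then 1%R else if ~~ contained a b then 0%R else
  (- \sum_(z <- perms_upto (size b) | contained a z && contained z b && (z != b))
        mu_rec k a z)%R.
Proof.
rewrite /= /perms_upto big_flatten big_map.
by rewrite -[in RHS](subn0 (size b).+1) -/(index_iota 0 _) big_mkord.
Qed.

Lemma mu_rec_nil k a : mu_rec k a [::] = iverson (a == [::]).
Proof.
have not_nil : a != [::] -> contained a [::] = false.
  by move=> neq_a; apply: contraNF neq_a => /contained_size; case: a.
by case: k => [|k] /=; case: eqP => // /eqP /not_nil ->.
Qed.

Lemma mu_rec_fuel k k' a b : is_perm b -> size b <= k -> size b <= k' ->
  mu_rec k a b = mu_rec k' a b.
Proof.
elim: k k' a b => [|k IH] k' a b Hb Hk Hk'.
  by move: Hk; rewrite leqn0 => /nilP ->; rewrite !mu_rec_nil.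
case: k' Hk' => [|k'] Hk'.
  by move: Hk'; rewrite leqn0 => /nilP ->; rewrite !mu_rec_nil.
rewrite !mu_recS; case: eqP => // _; case: (contained a b) => //=; congr (- _)%R.
rewrite big_seq_cond [RHS]big_seq_cond; apply: eq_bigr => z.
rewrite mem_perms_upto => /andP [/andP [Hz _] /andP [/andP [_ zb] neq_zb]].
by move: (contained_ltn Hz Hb zb neq_zb) => ltzb; apply: IH => //; lia.
Qed.

Lemma mu_refl a : mu a a = 1%R.
Proof. by rewrite /mu; case: (size a) => [|k] /=; rewrite eqxx. Qed.

Lemma mu_not_contained a b : ~~ contained a b -> mu a b = 0%R.
Proof.
move=> not_ab; have /negPf neq_ab : a != b.
  by apply: contraNneq not_ab => ->; apply: contained_refl.
by rewrite /mu; case: (size b) => [|k] /=; rewrite neq_ab not_ab.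
Qed.

Lemma muE a b : is_perm b -> contained a b -> a != b ->
  mu a b = (- \sum_(z <- perms_upto (size b) | contained a z && contained z b && (z != b))
               mu a z)%R.
Proof.
move=> Hb ab neq_ab; rewrite /mu.
case sizeb: (size b) => [|k].
  have /nilP a0 : nilp a by rewrite /nilp -leqn0 -sizeb contained_size.
  by rewrite a0 (size0nil sizeb) in neq_ab.
rewrite mu_recS (negbTE neq_ab) ab /= sizeb; congr (- _)%R.
rewrite big_seq_cond [RHS]big_seq_cond; apply: eq_bigr => z.
rewrite mem_perms_upto => /andP [/andP [Hz _] /andP [/andP [_ zb] neq_zb]].
by move: (contained_ltn Hz Hb zb neq_zb) => ltzb; apply: mu_rec_fuel => //; lia.
Qed.

Lemma sum_mu_interval n a z : is_perm a -> is_perm z -> contained a z -> size z <= n ->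
  (\sum_(y <- perms_upto n | contained a y && contained y z) mu a y = iverson (a == z))%R.
Proof.
move=> Ha Hz az sizez.
have z_in : z \in filter (fun y => contained a y && contained y z) (perms_upto n).
  by rewrite mem_filter az contained_refl mem_perms_upto Hz sizez.
rewrite -big_filter (bigD1_seq z) ?filter_uniq ?perms_upto_uniq // big_filter_cond.
case: eqP => [<- | /eqP neq_az].
  rewrite mu_refl big1_seq ?addr0 // => y /andP [/andP [/andP [ay ya] neq_ya]].
  by rewrite mem_perms_upto => /andP [Hy _]; rewrite (contained_anti Hy Ha ya ay) eqxx in neq_ya.
rewrite (@big_perms_upto_leq _ _ _ (size z)) //; last first.
  by move=> y /andP [/andP [_ /contained_size]].
by rewrite (muE Hz az neq_az); apply: addNr.
Qed.

(** * Normal occurrences and the Moebius function *)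

Local Open Scope ring_scope.

Lemma big_iverson_eq (T : eqType) (r : seq T) (P : pred T) (F : T -> int) x :
  uniq r -> x \in r ->
  \sum_(y <- r | P y) iverson (y == x) * F y = iverson (P x) * F x.
Proof.
move=> ur xr; rewrite big_mkcond (bigD1_seq x) //= eqxx big1 ?addr0 => [|y /negPf ->].
  by case: (P x); rewrite /iverson ?mul1r ?mul0r.
by case: (P y); rewrite /iverson ?mul0r.
Qed.

Lemma exchange_big_interval (T : Type) (R : ringType) (le : rel T) (r : seq T) a b
    (F G : T -> R) : transitive le ->
  \sum_(y <- r | le a y && le y b) F y * \sum_(z <- r | le y z && le z b) G z =
  \sum_(z <- r | le a z && le z b) (\sum_(y <- r | le a y && le y z) F y) * G z.
Proof.
move=> le_tr; under eq_bigr do rewrite mulr_sumr; under [RHS]eq_bigr do rewrite mulr_suml.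
rewrite (exchange_big_dep (fun z => le a z && le z b)) /=; last first.
  by move=> y z /andP [ay _] /andP [yz zb]; rewrite (le_tr _ _ _ ay yz).
apply: eq_bigr => z /andP [az zb]; apply: eq_bigl => y.
rewrite zb andbT andbAC.
by case: (boolP (le y z)) => yz; rewrite ?andbF // (le_tr _ _ _ yz zb) andbT.
Qed.

Definition normal_occurrence (z pi : seq nat) (A : {set 'I_(size pi)}) : bool :=
  is_occurrence z A && normal_mask (run_word pi) (value_mask A).

Definition normal_occ (z pi : seq nat) : nat :=
  #|[set A : {set 'I_(size pi)} | normal_occurrence z A]|.

Lemma normal_occE z pi :
  (normal_occ z pi)%:Z = \sum_(A : {set 'I_(size pi)}) iverson (normal_occurrence z A).
Proof.
rewrite /normal_occ -sum1_card -natz natr_sum big_mkcond /=.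
by apply: eq_bigr => A _; rewrite inE; case: normal_occurrence.
Qed.

Section NormalOccurrences.
Variable pi : seq nat.
Hypothesis Hpi : is_perm pi.

Lemma run_word_inj x : is_perm x -> run_word x = run_word pi -> x = pi.
Proof.
move=> Hx eq_run.
have sub : subseq (run_word x) (map (value_run pi) (filter predT (iota 1 (size pi)))).
  by rewrite filter_predT eq_run.
have [J occJ _] := run_word_subseq_occurs_at Hpi Hx sub.
apply: contained_size_eq => //; first by apply/containedP; exists J.
by rewrite -(size_run_word x) eq_run size_run_word.
Qed.

(* The only permutation having A as an occurrence is the standardization of its letters. *)
Lemma sum_normal_occurrence_interval y (A : {set 'I_(size pi)}) :
  \sum_(z <- perms_upto (size pi) | contained y z && contained z pi)
     (-1) ^+ (size pi - size z) * iverson (normal_occurrence z A) =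
  iverson (contained y (std (letters_at A))) *
    (mask_sign (value_mask A) * iverson (normal_mask (run_word pi) (value_mask A))).
Proof.
set s := std (letters_at A).
have Hs : is_perm s by apply/is_perm_std/uniq_letters_at/is_perm_uniq.
have sizes : #|A| = size s by rewrite size_std letters_at_positions !size_map cardE.
have s_pi : contained s pi.
  by apply/containedP; exists (positions A); apply/occurrenceP/same_orderP/order_iso_std.
have s_P : s \in perms_upto (size pi) by rewrite mem_perms_upto Hs (contained_size s_pi).
rewrite big_seq_cond (eq_bigr (fun z => iverson (z == s) *
    ((-1) ^+ (size pi - size z) * iverson (normal_mask (run_word pi) (value_mask A))))).
  rewrite -big_seq_cond big_iverson_eq ?perms_upto_uniq // s_pi andbT.
  by rewrite /mask_sign count_negb_value_mask // sizes.
move=> z /andP []; rewrite mem_perms_upto => /andP [Hz _] _.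
rewrite /normal_occurrence is_occurrence_std ?is_perm_uniq //.
by rewrite -/s; case: (z == s); rewrite /= ?mul1r ?mulr0 ?mul0r.
Qed.

Lemma sum_signed_normal_occ y : is_perm y -> des y = des pi ->
  \sum_(z <- perms_upto (size pi) | contained y z && contained z pi)
     (-1) ^+ (size pi - size z) * (normal_occ z pi)%:Z = iverson (y == pi).
Proof.
move=> Hy eq_des.
under eq_bigr do rewrite normal_occE mulr_sumr.
rewrite exchange_big /=.
under eq_bigr do rewrite sum_normal_occurrence_interval contained_std_run_word //.
rewrite (sum_value_mask Hpi (fun m => iverson (subseq (run_word y) (mask m (run_word pi))) *
  (mask_sign m * iverson (normal_mask (run_word pi) m)))).
have -> : (y == pi) = (run_word y == run_word pi).
  by apply/eqP/eqP => [-> // | /run_word_inj]; apply.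
rewrite -subword_sumE /subword_sum size_run_word [RHS]big_mkcond; apply: eq_bigr => m _.
by case: (normal_mask _ m); rewrite /iverson ?mulr1 ?mulr0 ?mul0r // mulrC.
Qed.

(* On [sigma, pi], mu(sigma, _) is a left inverse and the signed count of normal occurrences
   a right inverse of the zeta function, so the two agree. *)
Lemma mu_normal_occ sigma : is_perm sigma -> contained sigma pi -> des sigma = des pi ->
  mu sigma pi = (-1) ^+ (size pi - size sigma) * (normal_occ sigma pi)%:Z.
Proof.
move=> Hs sp eq_des; set P := perms_upto (size pi).
set f := fun z => (-1) ^+ (size pi - size z) * (normal_occ z pi)%:Z.
have uP : uniq P := perms_upto_uniq _.
have pi_P : pi \in P by rewrite mem_perms_upto Hpi leqnn.
have s_P : sigma \in P by rewrite mem_perms_upto Hs contained_size.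
have <- : \sum_(y <- P | contained sigma y && contained y pi)
    mu sigma y * \sum_(z <- P | contained y z && contained z pi) f z = mu sigma pi.
  rewrite big_seq_cond (eq_bigr (fun y => iverson (y == pi) * mu sigma y)) => [|y].
    by rewrite -big_seq_cond big_iverson_eq // sp contained_refl mul1r.
  rewrite mem_perms_upto => /andP [/andP [Hy _] /andP [sy ypi]].
  have eq_des_y : des y = des pi.
    by have := des_contained sy; have := des_contained ypi; lia.
  by rewrite sum_signed_normal_occ // mulrC.
rewrite exchange_big_interval; last by move=> z y z'; apply: contained_trans.
rewrite big_seq_cond (eq_bigr (fun z => iverson (z == sigma) * f z)) => [|z].
  by rewrite -big_seq_cond big_iverson_eq // contained_refl sp mul1r.
rewrite mem_perms_upto => /andP [/andP [Hz sizez] /andP [sz _]].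
by rewrite (sum_mu_interval Hs Hz sz sizez) eq_sym.
Qed.

End NormalOccurrences.

Theorem mainTheorem8 (sigma pi : seq nat) :
  is_perm sigma -> is_perm pi -> des sigma = des pi ->
  (`|mu sigma pi| <= occ sigma pi)%N.
Proof.
move=> Hs Hpi eq_des; case: (boolP (contained sigma pi)) => [sp | /mu_not_contained -> //].
rewrite (mu_normal_occ Hpi Hs sp eq_des) abszMsign absz_nat.
by apply/subset_leq_card/subsetP => A; rewrite !inE => /andP [].
Qed.
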